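(* Let $D\ge1$, let $Q_D$ be the $D$-dimensional hypercube on $X=\{0,1\}^D$ with adjacency matrix $A$. For $1\le i<j\le D$ put $B_{ij}=\alpha^*_iA\alpha^*_j-\alpha^*_jA\alpha^*_i$. Then for every $S\subseteq\{1,\ldots,D\}$, $$B_{ij}w_S=\begin{cases}-4\,w_{(S\cup\{j\})\setminus\{i\}} & \text{if } i\in S,\ j\notin S,\\ 4\,w_{(S\cup\{i\})\setminus\{j\}} & \text{if } i\notin S,\ j\in S,\\ 0&\text{otherwise.}\end{cases}$$
   Context: $Q_D$ is the graph with vertex set $X=\{0,1\}^D$ (sequences $x=(x_1,\ldots,x_D)$), two vertices adjacent iff they differ in exactly one coordinate. Matrices are real with rows and columns indexed by $X$ and act on $V=\mathbb{R}^X$. For $1\le i\le D$, $\alpha^*_i$ is the diagonal matrix with $(x,x)$-entry $1$ if $x_i=0$ and $-1$ if $x_i=1$. For $S\subseteq\{1,\ldots,D\}$, $w_S\in V$ is the vector with $x$-entry $2^{-D/2}\prod_{k\in S}(-1)^{x_k}$ (equivalently $w_S=w_1\otimes\cdots\otimes w_D$ with $w_k=u=\tfrac1{\sqrt2}(1,1)^t$ if $k\notin S$ and $w_k=v=\tfrac1{\sqrt2}(1,-1)^t$ if $k\in S$, under the identification $\mathbb{R}^X=(\mathbb{R}^{\{0,1\}})^{\otimes D}$). *)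

From mathcomp Require Import all_boot all_order all_algebra.
Set Implicit Arguments. Unset Strict Implicit. Unset Printing Implicit Defensive.
Import Order.TTheory GRing.Theory Num.Theory.
Local Open Scope ring_scope.

(* Coordinates 1..D of the paper are represented by 'I_D (0-based). *)
(* Vertex set X = {0,1}^D, with x_k = 1 encoded as true. *)
Notation cube D := {ffun 'I_D -> bool}.

Definition cmat (R : rcfType) (D : nat) := cube D -> cube D -> R.
Definition cvec (R : rcfType) (D : nat) := {ffun cube D -> R}.

Definition mxv (R : rcfType) D (M : cmat R D) (v : cvec R D) : cvec R D :=
  [ffun x : cube D => \sum_(y : cube D) M x y * v y].
Definition mxm (R : rcfType) D (M N : cmat R D) : cmat R D :=
  fun x z => \sum_(y : cube D) M x y * N y z.
Definition msub (R : rcfType) D (M N : cmat R D) : cmat R D :=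
  fun x z => M x z - N x z.

Definition hdist D (x y : cube D) : nat := #|[set k : 'I_D | x k != y k]|.

Definition adjQ (R : rcfType) D : cmat R D :=
  fun x y => if hdist x y == 1%N then 1 else 0.

Definition alphaS (R : rcfType) D (i : 'I_D) : cmat R D :=
  fun x y => if x == y then (if x i then -1 else 1) else 0.

Definition wS (R : rcfType) D (S : {set 'I_D}) : cvec R D :=
  [ffun x : cube D => Num.sqrt ((2%:R ^+ D)^-1) * \prod_(k in S) (if x k then -1 else 1)].

Definition scalev (R : rcfType) D (c : R) (v : cvec R D) : cvec R D :=
  [ffun x : cube D => c * v x].

Definition Bij (R : rcfType) D (i j : 'I_D) : cmat R D :=
  msub (mxm (alphaS R i) (mxm (@adjQ R D) (alphaS R j)))
       (mxm (alphaS R j) (mxm (@adjQ R D) (alphaS R i))).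

From mathcomp Require Import all_boot all_order all_algebra.
From mathcomp Require Import ring.
Import GRing.Theory Num.Theory.
Local Open Scope ring_scope.

(* With [s_k(y) = (-1)^(y_k)], [alpha*_k] is multiplication by [s_k] and [w_S]
   is a multiple of the character [prod_(k in S) s_k].  Summing over the
   neighbours [x^k] of [x] (flip coordinate [k]),
   [(B_ij w_S)(x) = sum_k (s_i(x) s_j(x^k) - s_j(x) s_i(x^k)) w_S(x^k)].
   Flipping [k] changes [s_j] only for [k = j] and [w_S] only by the sign
   [eps_k = (-1)^[k \in S]], so only [k = i, j] survive and
   [(B_ij w_S)(x) = 2 (eps_i - eps_j) s_i(x) s_j(x) w_S(x)].  This vanishes unless
   exactly one of [i], [j] is in [S], and then [s_i s_j w_S] is [w] of the
   symmetric difference of [S] and [{i, j}]. *)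

Section HypercubeCharacters.
Variables (R : rcfType) (D : nat).

Definition signb (b : bool) : R := if b then -1 else 1.

Definition character (S : {set 'I_D}) (x : cube D) : R :=
  \prod_(k in S) signb (x k).

Definition flip (x : cube D) (k : 'I_D) : cube D :=
  [ffun m => if m == k then ~~ x m else x m].

Lemma signbM_id (b : bool) : signb b * signb b = 1.
Proof. by case: b; rewrite /signb ?mulrNN mulr1. Qed.

Lemma signb_flip (x : cube D) (k m : 'I_D) :
  signb (flip x k m) = signb (m == k) * signb (x m).
Proof.
by rewrite ffunE /signb; case: (m == k); case: (x m); rewrite /= ?mulN1r ?mul1r ?opprK.
Qed.

Lemma mxm_alphaSl (k : 'I_D) (M : cmat R D) x y :
  mxm (alphaS R k) M x y = signb (x k) * M x y.
Proof.
rewrite /mxm (bigD1 x) //= big1 => [|z /negbTE zx]; rewrite /alphaS.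
  by rewrite eqxx addr0.
by rewrite eq_sym zx mul0r.
Qed.

Lemma mxm_alphaSr (k : 'I_D) (M : cmat R D) x y :
  mxm M (alphaS R k) x y = M x y * signb (y k).
Proof.
rewrite /mxm (bigD1 y) //= big1 => [|z /negbTE zy]; rewrite /alphaS.
  by rewrite eqxx addr0.
by rewrite zy mulr0.
Qed.

Lemma hdist_eq1 (x y : cube D) : (hdist x y == 1%N) = (y \in [set flip x k | k : 'I_D]).
Proof.
apply/idP/idP.
  move/cards1P => [k dxy]; apply/imsetP; exists k => //.
  apply/ffunP => m; rewrite ffunE.
  move/setP: dxy => /(_ m); rewrite !inE /=.
  by case: (m == k); case: (x m); case: (y m).
case/imsetP => k _ ->; apply/cards1P; exists k; apply/setP => m.
by rewrite !inE ffunE; case: (m == k) => //=; case: (x m).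
Qed.

Lemma flip_inj (x : cube D) : injective (flip x).
Proof.
move=> k1 k2 /ffunP/(_ k1); rewrite !ffunE eqxx.
by case: eqP => [-> //|_]; case: (x k1).
Qed.

Lemma sum_adjQ (f : cube D -> R) (x : cube D) :
  \sum_y adjQ R x y * f y = \sum_k f (flip x k).
Proof.
rewrite (bigID (mem [set flip x k | k : 'I_D])) /= [X in _ + X]big1 ?addr0.
  rewrite -[RHS](big_imset _ (in2W (@flip_inj x))) /=.
  by apply: eq_bigr => y xy; rewrite /adjQ hdist_eq1 xy mul1r.
by move=> y xy; rewrite /adjQ hdist_eq1 (negbTE xy) mul0r.
Qed.

Lemma character_flip (S : {set 'I_D}) (x : cube D) (k : 'I_D) :
  character S (flip x k) = signb (k \in S) * character S x.
Proof.
rewrite /character; under eq_bigr => m _ do rewrite signb_flip.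
rewrite big_split /=; congr (_ * _); case: (boolP (k \in S)) => kS.
  by rewrite (big_setD1 k kS) /= eqxx big1 ?mulr1 // => m /setD1P[/negbTE ->].
by rewrite big1 // => m mS; case: eqP mS => [->|]; rewrite ?(negbTE kS).
Qed.

Lemma wS_flip (S : {set 'I_D}) (x : cube D) (k : 'I_D) :
  wS R S (flip x k) = signb (k \in S) * wS R S x.
Proof.
rewrite [wS _ _ (flip x k)]ffunE [wS _ _ x]ffunE.
by rewrite -[\prod_(m in S) _]/(character S _) character_flip mulrCA.
Qed.

Lemma character_swap (S : {set 'I_D}) (i j : 'I_D) (x : cube D) :
  i \in S -> j \notin S ->
  character (j |: S :\ i) x = signb (x i) * signb (x j) * character S x.
Proof.
move=> iS jS; have jSi : j \notin S :\ i by rewrite !inE (negbTE jS) andbF.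
rewrite /character (big_setD1 i iS) big_setU1 //=.
by rewrite [_ * signb (x j)]mulrC -mulrA [signb (x i) * _]mulrA signbM_id mul1r.
Qed.

Lemma wS_swap {S : {set 'I_D}} {i j : 'I_D} (x : cube D) :
  i \in S -> j \notin S ->
  wS R (j |: S :\ i) x = signb (x i) * signb (x j) * wS R S x.
Proof.
move=> iS jS; rewrite !ffunE.
by rewrite -![\prod_(m in _) _]/(character _ _) character_swap // mulrCA.
Qed.

Lemma sum_signb_diff (i j : 'I_D) (e : 'I_D -> R) : i != j ->
  \sum_k ((signb (j == k) - signb (i == k)) * e k) = 2 * (e i - e j).
Proof.
move=> ij; have ji : j != i by rewrite eq_sym.
rewrite (bigD1 i) // (bigD1 j) //= big1 => [|k /andP[ki kj]].
  by rewrite (negbTE ij) (negbTE ji) !eqxx /signb; ring.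
by rewrite ![_ == k]eq_sym (negbTE ki) (negbTE kj) subrr mul0r.
Qed.

Lemma Bij_wS (i j : 'I_D) (S : {set 'I_D}) (x : cube D) : i != j ->
  mxv (Bij R i j) (wS R S) x =
    2 * (signb (i \in S) - signb (j \in S)) *
    (signb (x i) * signb (x j) * wS R S x).
Proof.
move=> ij; rewrite /mxv ffunE /Bij /msub.
under eq_bigr => y _ do rewrite !mxm_alphaSl !mxm_alphaSr.
transitivity (\sum_y adjQ R x y * ((signb (x i) * signb (y j)
  - signb (x j) * signb (y i)) * wS R S y)).
  by apply: eq_bigr => y _; ring.
rewrite sum_adjQ.
under eq_bigr => k _ do rewrite wS_flip !signb_flip.
transitivity (\sum_k ((signb (j == k) - signb (i == k)) * signb (k \in S))
  * (signb (x i) * signb (x j) * wS R S x)).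
  by apply: eq_bigr => k _; ring.
by rewrite -mulr_suml sum_signb_diff.
Qed.

End HypercubeCharacters.

Theorem lemma9p6 (R : rcfType) (D : nat) (i j : 'I_D) (S : {set 'I_D}) :
  (0 < D)%N -> (i < j)%N ->
  mxv (Bij R i j) (wS R S) =
    if (i \in S) && (j \notin S) then scalev (-4) (wS R (j |: S :\ i))
    else if (i \notin S) && (j \in S) then scalev 4 (wS R (i |: S :\ j))
    else [ffun _ => 0].
Proof.
move=> _ lt_ij; have ij : i != j by rewrite neq_ltn lt_ij.
apply/ffunP => x; rewrite Bij_wS //.
case iS: (i \in S); case jS: (j \in S) => /=; rewrite [RHS]ffunE.
- by rewrite subrr mulr0 mul0r.
- by rewrite (wS_swap _ _ x iS (negbT jS)) /signb; ring.
- by rewrite (wS_swap _ _ x jS (negbT iS)) /signb; ring.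
- by rewrite subrr mulr0 mul0r.
Qed.
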